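(* A set of atoms $M$ is an answer set by reduct of a basic program $P$ if and only if $M$ is a weakly well-supported model of $P$.
   Context: Fix a countable set $\mathcal{A}$ of atoms. A c-atom is $A=(A_d,A_c)$, $A_d\subseteq\mathcal{A}$, $A_c\subseteq 2^{A_d}$; $(\{p\},\{\{p\}\})$ is elementary; $\bot=(\mathcal{A},\emptyset)$. Rule: $A\leftarrow A_1,\dots,A_k,\mathit{not}\,A_{k+1},\dots,\mathit{not}\,A_n$, $head(r)=A$, $pos(r)=\{A_1,..,A_k\}$, $neg(r)=\{A_{k+1},..,A_n\}$. Program = set of rules; positive if no naf-literals; basic if every head is elementary or $\bot$. $S\models A$ iff $S\cap A_d\in A_c$; $S\models\mathit{not}\,A$ iff $S\cap A_d\notin A_c$; $S\models body(r)$ if all body literals hold; rule satisfied if head holds or body fails; model = satisfies all rules. Conditional satisfaction: $S\models_M A$ iff $S\models A$ and every $I$ with $S\cap A_d\subseteq I\subseteq M\cap A_d$ lies in $A_c$. For positive basic $P$: $T_P(S,M)=\{a\mid \exists r\in P,\ head(r)=(\{a\},\{\{a\}\}),\ S\models_M B\ \forall B\in pos(r)\}$, $T^0_P(\emptyset,M)=\emptyset$, $T^{i+1}_P(\emptyset,M)=T_P(T^i_P(\emptyset,M),M)$, $T^\infty_P(\emptyset,M)=\bigcup_i T^i_P(\emptyset,M)$; a model $M$ is an answer set iff $M=T^\infty_P(\emptyset,M)$. Reduct $P^M$: delete rules with some $\mathit{not}\,A$ in the body where $M\models A$, then delete remaining naf-literals; $M$ is an answer set by reduct of $P$ iff it is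 an answer set of $P^M$. Level mappings: for a set $M$ and $\ell:M\to\{1,2,\dots\}$, put $H(X)=\max\{\ell(a)\mid a\in X\}$ for $X\subseteq M$ (with $\max\emptyset=0$), and $L(A,M)=\min\{H(X)\mid X\in A_c,\ X\subseteq M,\ X\models_M A\}$, undefined if this set is empty. A model $M$ of basic $P$ is weakly well-supported iff there is such an $\ell$ such that for each $b\in M$ some $r\in P$ has $head(r)=(\{b\},\{\{b\}\})$, $M\models body(r)$, and for every $A\in pos(r)$, $L(A,M)$ is defined and $\ell(b)>L(A,M)$. *)

From Stdlib Require Import List.
Set Implicit Arguments.

Section Defs.
Variable Atom : Type.

Definition aset := Atom -> Prop.

Record catom := CAtom { Ad : aset ; Ac : aset -> Prop }.

Definition wf_catom (A : catom) : Prop :=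
  forall X, Ac A X -> forall x, X x -> Ad A x.

Definition is_elem (A : catom) (p : Atom) : Prop :=
  (forall x, Ad A x <-> x = p) /\
  (forall X, Ac A X <-> (forall x, X x <-> x = p)).

Definition is_bot (A : catom) : Prop :=
  (forall x, Ad A x) /\ (forall X, ~ Ac A X).

Record rule := Rule { head : catom ; pos : list catom ; neg : list catom }.

Definition program := rule -> Prop.

Definition wf_program (P : program) : Prop :=
  forall r, P r -> wf_catom (head r) /\ (forall A, In A (pos r) -> wf_catom A)
                  /\ (forall A, In A (neg r) -> wf_catom A).

Definition positive (P : program) : Prop := forall r, P r -> neg r = nil.

Definition basic (P : program) : Prop :=
  forall r, P r -> (exists p, is_elem (head r) p) \/ is_bot (head r).

Definition sat (S : aset) (A : catom) : Prop :=
  Ac A (fun x => S x /\ Ad A x).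

Definition sat_body (S : aset) (r : rule) : Prop :=
  (forall A, In A (pos r) -> sat S A) /\ (forall A, In A (neg r) -> ~ sat S A).

Definition sat_rule (S : aset) (r : rule) : Prop :=
  sat S (head r) \/ ~ sat_body S r.

Definition model (P : program) (M : aset) : Prop :=
  forall r, P r -> sat_rule M r.

Definition cond_sat (S M : aset) (A : catom) : Prop :=
  sat S A /\
  forall I : aset, (forall x, S x /\ Ad A x -> I x) ->
                   (forall x, I x -> M x /\ Ad A x) -> Ac A I.

Definition TP (P : program) (S M : aset) : aset :=
  fun a => exists r, P r /\ is_elem (head r) a /\
                     forall B, In B (pos r) -> cond_sat S M B.

Fixpoint TPn (P : program) (M : aset) (i : nat) : aset :=
  match i with
  | O => fun _ => False
  | S i' => TP P (TPn P M i') M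
  end.

Definition TPinf (P : program) (M : aset) : aset :=
  fun a => exists i, TPn P M i a.

Definition answer_set_pos (P : program) (M : aset) : Prop :=
  model P M /\ (forall a, M a <-> TPinf P M a).

Definition reduct (P : program) (M : aset) : program :=
  fun r' => exists r, P r /\ (forall A, In A (neg r) -> ~ sat M A) /\
                      r' = Rule (head r) (pos r) nil.

Definition answer_set_reduct (P : program) (M : aset) : Prop :=
  answer_set_pos (reduct P M) M.

(* H(X) = max { l a | a in X } (max of empty = 0), as a relation:
   h is the least upper bound in nat of the levels of X
   (exists iff the max exists). *)
Definition IsH (l : Atom -> nat) (X : aset) (h : nat) : Prop :=
  (forall a, X a -> l a <= h) /\
  (forall h', (forall a, X a -> l a <= h') -> h <= h').

Definition L_cand (M : aset) (A : catom) (X : aset) : Prop :=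
  Ac A X /\ (forall x, X x -> M x) /\ cond_sat X M A.

Definition LevelL (l : Atom -> nat) (A : catom) (M : aset) (n : nat) : Prop :=
  (exists X, L_cand M A X /\ IsH l X n) /\
  (forall X h, L_cand M A X -> IsH l X h -> n <= h).

Definition weakly_well_supported (P : program) (M : aset) : Prop :=
  model P M /\
  exists l : Atom -> nat,
    (forall a, M a -> 1 <= l a) /\
    forall b, M b ->
      exists r, P r /\ is_elem (head r) b /\ sat_body M r /\
        forall A, In A (pos r) -> exists n, LevelL l A M n /\ n < l b.

End Defs.

(* Write R := P^M for the reduct.  R is positive, and R and P have the same
   models among which M lies (a rule of P whose negative body fails in M is
   satisfied anyway; the other rules become exactly the rules of R).
   - (->) Every atom of M = T_R^oo(M) has a least stage, the least i with
     a in T_R^i(M); take that stage as its level.  An atom b of stage k+1 is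
     produced by a rule whose positive body is conditionally satisfied by
     S := T_R^k(M), and all atoms of S have level <= k, so the candidate
     S ∩ A_d bounds L(A, M) by k < level of b (lemma [level_bound]).
   - (<-) By induction on k, every atom of M of level <= k lies in T_R^k(M):
     the candidate X realising L(A, M) only contains atoms of smaller level,
     and conditional satisfaction is monotone in the satisfying set.
   Conversely T_R^k(M) ⊆ M for any positive program having M as a model. *)

From Pilot Require Import Defs.
From Stdlib Require Import List Classical ClassicalEpsilon Lia Wf_nat Arith.

Lemma nat_least (Q : nat -> Prop) (m : nat) :
  Q m -> exists n, Q n /\ forall k, Q k -> n <= k.
Proof.
  induction m as [m IH] using lt_wf_ind. intros Qm.
  destruct (classic (exists k, Q k /\ k < m)) as [[k [Qk lt]] | N].
  - exact (IH k lt Qk).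
  - exists m; split; [exact Qm |].
    intros k Qk. destruct (le_lt_dec m k) as [le | lt]; [exact le |].
    exfalso; apply N; eauto.
Qed.

Section ConditionalSatisfaction.
Context {Atom : Type}.
Implicit Types (S X M : aset Atom) (A : catom Atom).

Lemma cond_sat_sat {S M A} :
  (forall x, S x -> M x) -> cond_sat S M A -> sat M A.
Proof.
  intros sub [_ closed]. apply closed.
  - intros x [Sx Ax]; split; auto.
  - intros x Ix; exact Ix.
Qed.

Lemma cond_sat_mono {X S M A} :
  (forall x, X x -> S x) -> (forall x, S x -> M x) ->
  cond_sat X M A -> cond_sat S M A.
Proof.
  intros XS SM [_ closed]. split.
  - apply closed.
    + intros x [Xx Ax]; split; auto.
    + intros x [Sx Ax]; split; auto.
  - intros I SI IM. apply closed; [| exact IM].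
    intros x [Xx Ax]; apply SI; split; auto.
Qed.

Lemma sat_elem {M A a} : is_elem A a -> sat M A -> M a.
Proof.
  intros [_ HAc] HsatA.
  exact (proj1 (proj2 (proj1 (HAc _) HsatA a) eq_refl)).
Qed.

Lemma IsH_exists (l : Atom -> nat) {X} {k : nat} :
  (forall a, X a -> l a <= k) -> exists h, IsH l X h /\ h <= k.
Proof.
  intros bound.
  destruct (nat_least (fun h => forall a, X a -> l a <= h) k bound)
    as [h [Hh least]].
  exists h; split; [split; [exact Hh | exact least] | exact (least k bound)].
Qed.

(* If S ⊆ M conditionally satisfies A and all atoms of S have level <= k,
   then L(A, M) is defined and is at most k (witnessed by X := S ∩ A_d). *)
Lemma level_bound (l : Atom -> nat) {S M A} {k : nat} :
  (forall x, S x -> M x) -> (forall a, S a -> l a <= k) ->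
  cond_sat S M A -> exists n, LevelL l A M n /\ n <= k.
Proof.
  intros SM bound csS.
  set (X := fun x => S x /\ Ad A x).
  assert (candX : L_cand M A X).
  { split; [exact (proj1 csS) | split].
    - intros x [Sx _]; auto.
    - destruct csS as [_ closed]. split.
      + apply closed.
        * intros x [Sx Ax]; split; [split |]; auto.
        * intros x [[Sx Ax] _]; auto.
      + intros I XI IM. apply closed; [| exact IM].
        intros x [Sx Ax]; apply XI; split; [split |]; auto. }
  assert (boundX : forall a, X a -> l a <= k) by (intros a [Sa _]; auto).
  destruct (IsH_exists l boundX) as [h [Hh hk]].
  destruct (nat_least (fun n => exists Y, L_cand M A Y /\ IsH l Y n) h
              (ex_intro _ X (conj candX Hh))) as [n [Hn least]].
  exists n; split.
  - split; [exact Hn |]. intros Y h' candY Hh'; apply least; eauto.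
  - enough (n <= h) by lia. apply least; eauto.
Qed.

End ConditionalSatisfaction.

Section Reduct.
Context {Atom : Type}.
Variables (P : program Atom) (M : aset Atom).

Lemma reduct_positive : positive (reduct P M).
Proof. intros r' [r [_ [_ ->]]]; reflexivity. Qed.

Lemma reduct_model_iff : model (reduct P M) M <-> model P M.
Proof.
  split.
  - intros HmodR r Pr.
    destruct (classic (exists A, In A (neg r) /\ sat M A)) as [[A [inA sA]] | N].
    + right; intros [_ Hneg]; exact (Hneg A inA sA).
    + assert (Rr : reduct P M (Rule (Defs.head r) (pos r) nil)).
      { exists r; split; [exact Pr | split; [| reflexivity]].
        intros A inA sA; apply N; eauto. }
      destruct (HmodR _ Rr) as [Hhead | Nbody]; [left; exact Hhead |].
      right; intros [Hpos Hneg]; apply Nbody; split; simpl; [exact Hpos | tauto].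
  - intros Hmod r' [r [Pr [Hneg ->]]]; unfold sat_rule; simpl.
    destruct (Hmod r Pr) as [Hhead | Nbody]; [left; exact Hhead |].
    right; intros [Hpos _]; apply Nbody; split; [exact Hpos | exact Hneg].
Qed.

End Reduct.

Section Stages.
Context {Atom : Type} {Q : program Atom} {M : aset Atom}.

Lemma TPn_sub_model :
  positive Q -> model Q M -> forall i a, TPn Q M i a -> M a.
Proof.
  intros Hpos Hmod i. induction i as [| i IH]; simpl; [tauto |].
  intros a [r [Qr [Helem Hbody]]].
  destruct (Hmod r Qr) as [Hhead | Nbody].
  - exact (sat_elem Helem Hhead).
  - exfalso; apply Nbody; split.
    + intros A inA; exact (cond_sat_sat IH (Hbody A inA)).
    + rewrite (Hpos r Qr); intros A [].
Qed.

Lemma least_stage_exists :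
  exists stage : Atom -> nat, forall a, TPinf Q M a ->
    TPn Q M (stage a) a /\ forall j, TPn Q M j a -> stage a <= j.
Proof.
  assert (Hchoice : forall a, exists n, TPinf Q M a ->
                      TPn Q M n a /\ forall j, TPn Q M j a -> n <= j).
  { intros a. destruct (classic (TPinf Q M a)) as [[i Hi] | Nin].
    - destruct (nat_least (fun j => TPn Q M j a) i Hi) as [n Hn].
      exists n; auto.
    - exists 0; intros Hin; contradiction. }
  exists (fun a => proj1_sig (constructive_indefinite_description _ (Hchoice a))).
  intros a; exact (proj2_sig (constructive_indefinite_description _ (Hchoice a))).
Qed.

End Stages.

Section Characterisation.
Context {Atom : Type} {P : program Atom} {M : aset Atom}.
Let R := reduct P M.

Lemma answer_set_levels :
  answer_set_pos R M ->
  exists l : Atom -> nat,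
    (forall a, M a -> 1 <= l a) /\
    forall b, M b ->
      exists r, P r /\ is_elem (Defs.head r) b /\ sat_body M r /\
        forall A, In A (pos r) -> exists n, LevelL l A M n /\ n < l b.
Proof.
  intros [HmodR Hfix].
  pose proof (TPn_sub_model (reduct_positive P M) HmodR) as stage_sub.
  destruct (@least_stage_exists _ R M) as [l Hl].
  exists l; split.
  - intros a Ma. destruct (Hl a (proj1 (Hfix a) Ma)) as [Hin _].
    destruct (l a); simpl in Hin; [contradiction | lia].
  - intros b Mb. destruct (Hl b (proj1 (Hfix b) Mb)) as [Hin _].
    destruct (l b) as [| k]; simpl in Hin; [contradiction |].
    destruct Hin as [r' [[r [Pr [Hneg ->]]] [Helem Hbody]]]; simpl in Helem, Hbody.
    assert (levels_below : forall a, TPn R M k a -> l a <= k).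
    { intros a Ha. apply (proj2 (Hl a (ex_intro _ k Ha))); exact Ha. }
    exists r; split; [exact Pr | split; [exact Helem | split]].
    + split; [| exact Hneg].
      intros A inA; exact (cond_sat_sat (stage_sub k) (Hbody A inA)).
    + intros A inA.
      destruct (level_bound l (stage_sub k) levels_below (Hbody A inA))
        as [n [Hn nk]].
      exists n; split; [exact Hn | lia].
Qed.

Lemma levels_in_stages {l : Atom -> nat} :
  model R M ->
  (forall a, M a -> 1 <= l a) ->
  (forall b, M b ->
     exists r, P r /\ is_elem (Defs.head r) b /\ sat_body M r /\
       forall A, In A (pos r) -> exists n, LevelL l A M n /\ n < l b) ->
  forall k b, M b -> l b <= k -> TPn R M k b.
Proof.
  intros HmodR Hl1 Hsup k.
  pose proof (TPn_sub_model (reduct_positive P M) HmodR) as stage_sub.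
  induction k as [| k IH]; intros b Mb Hle.
  - specialize (Hl1 b Mb); lia.
  - destruct (Hsup b Mb) as [r [Pr [Helem [[_ Hneg] Hlev]]]].
    exists (Rule (Defs.head r) (pos r) nil); split; [exists r; auto |].
    split; [exact Helem |]. simpl. intros A inA.
    destruct (Hlev A inA) as [n [[[X [[_ [XM csX]] HX]] _] ltn]].
    apply (cond_sat_mono (X := X)); [| apply stage_sub | exact csX].
    intros x Xx. apply IH; [auto |].
    pose proof (proj1 HX x Xx); lia.
Qed.

End Characterisation.

Theorem proposition5 (Atom : Type)
  (Hcount : exists f : Atom -> nat, forall x y, f x = f y -> x = y)
  (P : program Atom) (HwfP : wf_program P) (Hbasic : basic P) (M : aset Atom) :
  answer_set_reduct P M <-> weakly_well_supported P M.
Proof.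
  split.
  - intros Hans. split.
    + apply reduct_model_iff, (proj1 Hans).
    + exact (answer_set_levels Hans).
  - intros [Hmod [l [Hl1 Hsup]]].
    assert (HmodR : model (reduct P M) M) by (apply reduct_model_iff; exact Hmod).
    split; [exact HmodR |]. intros a; split.
    + intros Ma. exists (l a). exact (levels_in_stages HmodR Hl1 Hsup _ _ Ma (le_n _)).
    + intros [i Hi]. exact (TPn_sub_model (reduct_positive P M) HmodR _ _ Hi).
Qed.
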